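(* Let $\alpha\neq0$ be real, let $\mathbf{u}=(u_1,u_2)$ and $\mathbf{v}=(-u_1,u_2)$ be constant unit vectors with $u_1u_2\neq0$, and let $\mathbf{f}=(f_1,f_2)\in C_c^2(S^1;\mathbb{D})$. Then $D_\mathbf{u}D_\mathbf{v}\mathcal{L}_\alpha\mathbf{f}=\partial_{\tilde x_1}f_2-\partial_{\tilde x_2}f_1=\tilde\delta^\perp\mathbf{f}$ and $D_\mathbf{u}D_\mathbf{v}\mathcal{T}_\alpha\mathbf{f}=-(\partial_{\tilde x_1}f_1+\partial_{\tilde x_2}f_2)=-\tilde\delta\mathbf{f}$.
   Context: $\mathbb{D}$ is the open unit disc in $\mathbb{R}^2$; $C_c^2(S^1;\mathbb{D})$ is the space of $C^2$ vector fields with compact support in $\mathbb{D}$. $\mathbf{a}^\perp=(-a_2,a_1)$; $D_\mathbf{u}=\mathbf{u}\cdot\nabla$. The weighted longitudinal and transverse V-line transforms are $\mathcal{L}_\alpha\mathbf{f}(\mathbf{x})=-\int_0^\infty\mathbf{u}\cdot\mathbf{f}(\mathbf{x}+t\mathbf{u})\,dt+\alpha\int_0^\infty\mathbf{v}\cdot\mathbf{f}(\mathbf{x}+t\mathbf{v})\,dt$ and $\mathcal{T}_\alpha\mathbf{f}(\mathbf{x})=-\int_0^\infty\mathbf{u}^\perp\cdot\mathbf{f}(\mathbf{x}+t\mathbf{u})\,dt+\alpha\int_0^\infty\mathbf{v}^\perp\cdot\mathbf{f}(\mathbf{x}+t\mathbf{v})\,dt$. The differential operators $\partial_{\tilde x_1}=-(1+\alpha)u_1u_2\partial_{x_1}+(1-\alpha)u_2^2\partial_{x_2}$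 and $\partial_{\tilde x_2}=(1-\alpha)u_1^2\partial_{x_1}-(1+\alpha)u_1u_2\partial_{x_2}$ (derivatives in the linear coordinates $\tilde x$ with $x_1=-(1+\alpha)u_1u_2\tilde x_1+(1-\alpha)u_1^2\tilde x_2$, $x_2=(1-\alpha)u_2^2\tilde x_1-(1+\alpha)u_1u_2\tilde x_2$); $\tilde\delta\mathbf{f}=\partial_{\tilde x_1}f_1+\partial_{\tilde x_2}f_2$, $\tilde\delta^\perp\mathbf{f}=\partial_{\tilde x_1}f_2-\partial_{\tilde x_2}f_1$. *)

From Stdlib Require Import Reals.
From Coquelicot Require Export Coquelicot.
Open Scope R_scope.

Definition sfield := R -> R -> R.

Definition d1 (g : sfield) : sfield := fun x1 x2 => Derive (fun y => g y x2) x1.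
Definition d2 (g : sfield) : sfield := fun x1 x2 => Derive (fun y => g x1 y) x2.

Definition Ddir (a1 a2 : R) (g : sfield) : sfield :=
  fun x1 x2 => a1 * d1 g x1 x2 + a2 * d2 g x1 x2.

Definition cont2 (g : sfield) : Prop :=
  forall p : R * R, continuous (fun q : R * R => g (fst q) (snd q)) p.

Definition C2 (g : sfield) : Prop :=
  (forall x1 x2, ex_derive (fun y => g y x2) x1) /\
  (forall x1 x2, ex_derive (fun y => g x1 y) x2) /\
  (forall x1 x2, ex_derive (fun y => d1 g y x2) x1) /\
  (forall x1 x2, ex_derive (fun y => d1 g x1 y) x2) /\
  (forall x1 x2, ex_derive (fun y => d2 g y x2) x1) /\
  (forall x1 x2, ex_derive (fun y => d2 g x1 y) x2) /\
  cont2 g /\ cont2 (d1 g) /\ cont2 (d2 g) /\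
  cont2 (d1 (d1 g)) /\ cont2 (d2 (d1 g)) /\
  cont2 (d1 (d2 g)) /\ cont2 (d2 (d2 g)).

(* compact support contained in the open unit disc D:
   the support lies in a closed disc of radius r < 1 *)
Definition supp_in_disc (g : sfield) : Prop :=
  exists r, 0 <= r < 1 /\ forall x1 x2, r ^ 2 < x1 ^ 2 + x2 ^ 2 -> g x1 x2 = 0.

Definition Cc2_disc (f1 f2 : sfield) : Prop :=
  C2 f1 /\ C2 f2 /\ supp_in_disc f1 /\ supp_in_disc f2.

Definition int0inf (h : R -> R) : R :=
  RInt_gen h (at_point 0) (Rbar_locally p_infty).

Definition Ltr (alpha u1 u2 v1 v2 : R) (f1 f2 : sfield) : sfield :=
  fun x1 x2 =>
    - int0inf (fun t => u1 * f1 (x1 + t * u1) (x2 + t * u2)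
                        + u2 * f2 (x1 + t * u1) (x2 + t * u2))
    + alpha * int0inf (fun t => v1 * f1 (x1 + t * v1) (x2 + t * v2)
                                + v2 * f2 (x1 + t * v1) (x2 + t * v2)).

(* weighted transverse V-line transform; a^perp = (-a2, a1) *)
Definition Ttr (alpha u1 u2 v1 v2 : R) (f1 f2 : sfield) : sfield :=
  fun x1 x2 =>
    - int0inf (fun t => (- u2) * f1 (x1 + t * u1) (x2 + t * u2)
                        + u1 * f2 (x1 + t * u1) (x2 + t * u2))
    + alpha * int0inf (fun t => (- v2) * f1 (x1 + t * v1) (x2 + t * v2)
                                + v1 * f2 (x1 + t * v1) (x2 + t * v2)).

Definition dt1 (alpha u1 u2 : R) (g : sfield) : sfield :=
  fun x1 x2 => - (1 + alpha) * u1 * u2 * d1 g x1 x2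
               + (1 - alpha) * u2 ^ 2 * d2 g x1 x2.
Definition dt2 (alpha u1 u2 : R) (g : sfield) : sfield :=
  fun x1 x2 => (1 - alpha) * u1 ^ 2 * d1 g x1 x2
               - (1 + alpha) * u1 * u2 * d2 g x1 x2.

Definition tdelta (alpha u1 u2 : R) (f1 f2 : sfield) : sfield :=
  fun x1 x2 => dt1 alpha u1 u2 f1 x1 x2 + dt2 alpha u1 u2 f2 x1 x2.
Definition tdelta_perp (alpha u1 u2 : R) (f1 f2 : sfield) : sfield :=
  fun x1 x2 => dt1 alpha u1 u2 f2 x1 x2 - dt2 alpha u1 u2 f1 x1 x2.

(* Write L = -I_u (u.f) + alpha I_v (v.f), where I_a g (x) = int_0^oo g (x + t a) dt.
   For a compactly supported C^1 field g, near any point the integral runs over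
   one fixed bounded interval, so derivatives pass under it: D_b I_a g = I_a (D_b g).
   Along the ray itself the fundamental theorem of calculus gives D_a I_a g = -g,
   the ray eventually leaving the support.  Hence
     D_u D_v L = D_u (-I_u (D_v (u.f)) - alpha v.f) = D_v (u.f) - alpha D_u (v.f),
   and likewise for the transverse transform with u^perp, v^perp; expanding these
   first-order expressions gives the stated combinations of the tilde derivatives. *)

From Stdlib Require Import Reals Lra Psatz FunctionalExtensionality.
From Coquelicot Require Import Coquelicot.
(* Imported last, since Stdlib's Reals also defines a [d1]. *)
Open Scope R_scope.
Set Bullet Behavior "Strict Subproofs".

Definition lcomb (c1 : R) (g1 : sfield) (c2 : R) (g2 : sfield) : sfield :=
  fun x y => c1 * g1 x y + c2 * g2 x y.

(* [d2 g x y] is convertible to [d1 (swap g) y x]: facts about [d2] are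
   obtained from those about [d1] through [swap]. *)
Definition swap (g : sfield) : sfield := fun x y => g y x.

Definition vanishes_outside (r : R) (g : sfield) : Prop :=
  forall x y, r < x ^ 2 + y ^ 2 -> g x y = 0.

Definition bounded_support (g : sfield) : Prop :=
  exists r, 0 <= r /\ vanishes_outside r g.

Record C1c (g : sfield) : Prop := {
  C1c_ex_d1 : forall x y, ex_derive (fun z => g z y) x;
  C1c_ex_d2 : forall x y, ex_derive (fun z => g x z) y;
  C1c_cont : cont2 g;
  C1c_cont_d1 : cont2 (d1 g);
  C1c_cont_d2 : cont2 (d2 g);
  C1c_supp : bounded_support g }.

Lemma cont2_lcomb c1 g1 c2 g2 : cont2 g1 -> cont2 g2 -> cont2 (lcomb c1 g1 c2 g2).
Proof.
  intros H1 H2 p.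
  apply (continuous_plus (fun q : R * R => c1 * g1 (fst q) (snd q))
                         (fun q : R * R => c2 * g2 (fst q) (snd q))).
  - apply (continuous_mult (fun _ : R * R => c1) (fun q => g1 (fst q) (snd q))).
    + apply continuous_const.
    + apply H1.
  - apply (continuous_mult (fun _ : R * R => c2) (fun q => g2 (fst q) (snd q))).
    + apply continuous_const.
    + apply H2.
Qed.

Lemma cont2_swap g : cont2 g -> cont2 (swap g).
Proof.
  intros H [x y].
  apply (continuous_comp_2 (fun q : R * R => snd q) (fun q : R * R => fst q) g).
  - apply continuous_snd.
  - apply continuous_fst.
  - apply H.
Qed.

Lemma continuous_on_line g x y a1 a2 t : cont2 g ->
  continuous (fun t => g (x + t * a1) (y + t * a2)) t.
Proof.
  intros H.
  apply (continuous_comp_2 (fun t => x + t * a1) (fun t => y + t * a2) g).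
  - apply (ex_derive_continuous (fun t => x + t * a1)); auto_derive; auto.
  - apply (ex_derive_continuous (fun t => y + t * a2)); auto_derive; auto.
  - apply H.
Qed.

Lemma d1_lcomb c1 g1 c2 g2 x y :
  ex_derive (fun z => g1 z y) x -> ex_derive (fun z => g2 z y) x ->
  d1 (lcomb c1 g1 c2 g2) x y = c1 * d1 g1 x y + c2 * d1 g2 x y.
Proof.
  intros H1 H2. unfold d1, lcomb.
  rewrite Derive_plus, !Derive_scal; auto using ex_derive_scal.
Qed.

Lemma d2_lcomb c1 g1 c2 g2 x y :
  ex_derive (fun z => g1 x z) y -> ex_derive (fun z => g2 x z) y ->
  d2 (lcomb c1 g1 c2 g2) x y = c1 * d2 g1 x y + c2 * d2 g2 x y.
Proof. exact (d1_lcomb c1 (swap g1) c2 (swap g2) y x). Qed.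

Lemma Ddir_lcomb b1 b2 c1 g1 c2 g2 x y :
  ex_derive (fun z => g1 z y) x -> ex_derive (fun z => g1 x z) y ->
  ex_derive (fun z => g2 z y) x -> ex_derive (fun z => g2 x z) y ->
  Ddir b1 b2 (lcomb c1 g1 c2 g2) x y
  = c1 * Ddir b1 b2 g1 x y + c2 * Ddir b1 b2 g2 x y.
Proof.
  intros. unfold Ddir. rewrite d1_lcomb, d2_lcomb by assumption. ring.
Qed.

Lemma bounded_support_lcomb c1 g1 c2 g2 :
  bounded_support g1 -> bounded_support g2 -> bounded_support (lcomb c1 g1 c2 g2).
Proof.
  intros [r1 [Hr1 S1]] [r2 [Hr2 S2]]. exists (Rmax r1 r2). split.
  - eapply Rle_trans; [exact Hr1 | apply Rmax_l].
  - intros x y H. unfold lcomb. rewrite S1, S2; [ring | |].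
    + eapply Rle_lt_trans; [apply Rmax_r | exact H].
    + eapply Rle_lt_trans; [apply Rmax_l | exact H].
Qed.

Lemma bounded_support_swap g : bounded_support g -> bounded_support (swap g).
Proof.
  intros [r [Hr S]]. exists r. split; [exact Hr|].
  intros x y H. apply S. lra.
Qed.

(* The derivative vanishes wherever [g] vanishes on a neighbourhood, and the
   complement of a closed disc is open. *)
Lemma vanishes_outside_d1 r g : vanishes_outside r g -> vanishes_outside r (d1 g).
Proof.
  intros S x y H. unfold d1.
  rewrite (Derive_ext_loc _ (fun _ => 0)); [apply Derive_const|].
  assert (Hc : continuous (fun t => t ^ 2 + y ^ 2) x)
    by (apply (ex_derive_continuous (fun t => t ^ 2 + y ^ 2)); auto_derive; auto).
  eapply filter_imp; [| exact (Hc _ (open_gt r _ H))].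
  intros t Ht. apply S, Ht.
Qed.

Lemma vanishes_outside_d2 r g : vanishes_outside r g -> vanishes_outside r (d2 g).
Proof.
  intros S x y H. apply (vanishes_outside_d1 r (swap g)); [| lra].
  intros u v Huv. apply S. lra.
Qed.

Lemma bounded_support_d1 g : bounded_support g -> bounded_support (d1 g).
Proof. intros [r [Hr S]]. exists r. split; [exact Hr | apply vanishes_outside_d1, S]. Qed.

Lemma bounded_support_d2 g : bounded_support g -> bounded_support (d2 g).
Proof. intros [r [Hr S]]. exists r. split; [exact Hr | apply vanishes_outside_d2, S]. Qed.

Lemma C1c_lcomb c1 g1 c2 g2 : C1c g1 -> C1c g2 -> C1c (lcomb c1 g1 c2 g2).
Proof.
  intros [A1 B1 C1 D1 E1 S1] [A2 B2 C2 D2 E2 S2]. split.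
  - intros x y. apply (ex_derive_plus (fun z => c1 * g1 z y) (fun z => c2 * g2 z y));
      apply ex_derive_scal; auto.
  - intros x y. apply (ex_derive_plus (fun z => c1 * g1 x z) (fun z => c2 * g2 x z));
      apply ex_derive_scal; auto.
  - apply cont2_lcomb; auto.
  - replace (d1 (lcomb c1 g1 c2 g2)) with (lcomb c1 (d1 g1) c2 (d1 g2)).
    + apply cont2_lcomb; auto.
    + do 2 (apply functional_extensionality; intro). symmetry. apply d1_lcomb; auto.
  - replace (d2 (lcomb c1 g1 c2 g2)) with (lcomb c1 (d2 g1) c2 (d2 g2)).
    + apply cont2_lcomb; auto.
    + do 2 (apply functional_extensionality; intro). symmetry. apply d2_lcomb; auto.
  - apply bounded_support_lcomb; auto.
Qed.

Lemma C1c_swap g : C1c g -> C1c (swap g).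
Proof.
  intros [A B C D E S]. split.
  - intros x y. apply B.
  - intros x y. apply A.
  - apply cont2_swap, C.
  - apply (cont2_swap (d2 g)), E.
  - apply (cont2_swap (d1 g)), D.
  - apply bounded_support_swap, S.
Qed.

Lemma C2_C1c g : C2 g -> bounded_support g -> C1c g /\ C1c (d1 g) /\ C1c (d2 g).
Proof.
  intros (A & B & C & D & E & F & G & H & I & J & K & L & M) S.
  repeat split; auto using bounded_support_d1, bounded_support_d2.
Qed.

Lemma C1c_Ddir_lcomb b1 b2 c1 f1 c2 f2 :
  C2 f1 -> C2 f2 -> bounded_support f1 -> bounded_support f2 ->
  C1c (Ddir b1 b2 (lcomb c1 f1 c2 f2)).
Proof.
  intros H1 H2 S1 S2.
  destruct (C2_C1c f1 H1 S1) as (F1 & F11 & F12).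
  destruct (C2_C1c f2 H2 S2) as (F2 & F21 & F22).
  replace (Ddir b1 b2 (lcomb c1 f1 c2 f2))
    with (lcomb b1 (lcomb c1 (d1 f1) c2 (d1 f2)) b2 (lcomb c1 (d2 f1) c2 (d2 f2))).
  - auto using C1c_lcomb.
  - do 2 (apply functional_extensionality; intro).
    unfold Ddir. rewrite d1_lcomb, d2_lcomb; auto using C1c_ex_d1, C1c_ex_d2.
Qed.

Lemma differentiable_pt_lim_partials g x y :
  (forall u v, ex_derive (fun z => g z v) u) -> ex_derive (fun z => g x z) y ->
  cont2 (d1 g) -> differentiable_pt_lim g x y (d1 g x y) (d2 g x y).
Proof.
  intros H1 H2 C. apply filterdiff_differentiable_pt_lim.
  eapply filterdiff_ext_lin.
  - apply (is_derive_filterdiff g x y (d1 g) (d2 g x y)).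
    + apply filter_forall. intros [u v]. apply Derive_correct, H1.
    + apply Derive_correct, H2.
    + apply C.
  - intros [u v]. unfold plus, scal; simpl. unfold mult; simpl. ring.
Qed.

Lemma ray_leaves_disc a1 a2 r x y t : a1 ^ 2 + a2 ^ 2 = 1 -> 0 <= r ->
  2 * (Rabs x + Rabs y) + r + 1 <= t -> r < (x + t * a1) ^ 2 + (y + t * a2) ^ 2.
Proof.
  intros Ha Hr Ht.
  assert (Hx : - Rabs x <= x * a1) by (unfold Rabs; destruct (Rcase_abs x); nra).
  assert (Hy : - Rabs y <= y * a2) by (unfold Rabs; destruct (Rcase_abs y); nra).
  pose proof (Rabs_pos x). pose proof (Rabs_pos y).
  replace ((x + t * a1) ^ 2 + (y + t * a2) ^ 2)
    with (x ^ 2 + y ^ 2 + 2 * t * (x * a1 + y * a2) + t ^ 2 * (a1 ^ 2 + a2 ^ 2)) by ring.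
  rewrite Ha. nra.
Qed.

Lemma is_RInt_gen_vanishing (h : R -> R) a M l : a <= M ->
  (forall t, M <= t -> h t = 0) -> is_RInt h a M l ->
  is_RInt_gen h (at_point a) (Rbar_locally p_infty) l.
Proof.
  intros HaM Hh Hl P [eps HP].
  apply Filter_prod with (Q := fun a' => a' = a) (R := fun b => M < b).
  - reflexivity.
  - exists M. auto.
  - intros a' b -> Hb. simpl in Hb. exists l. split; [| apply HP, ball_center].
    simpl. replace l with (plus l (scal (b - M) (@zero R_NormedModule)))
      by (unfold plus, scal, zero; simpl; unfold mult; simpl; ring).
    apply is_RInt_Chasles with M; [exact Hl|].
    apply is_RInt_ext with (fun _ => zero); [| apply is_RInt_const].
    intros t [Ht _]. rewrite Rmin_left in Ht by lra. symmetry. apply Hh. lra.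
Qed.

Definition ray_int (a1 a2 : R) (g : sfield) : sfield :=
  fun x y => int0inf (fun t => g (x + t * a1) (y + t * a2)).

Lemma is_RInt_gen_ray a1 a2 g r x y M : a1 ^ 2 + a2 ^ 2 = 1 -> 0 <= r ->
  vanishes_outside r g -> cont2 g -> 2 * (Rabs x + Rabs y) + r + 1 <= M ->
  is_RInt_gen (fun t => g (x + t * a1) (y + t * a2)) (at_point 0)
    (Rbar_locally p_infty) (RInt (fun t => g (x + t * a1) (y + t * a2)) 0 M).
Proof.
  intros Ha Hr Hg Cg HM.
  pose proof (Rabs_pos x). pose proof (Rabs_pos y).
  apply (is_RInt_gen_vanishing _ 0 M); [lra | |].
  - intros t Ht. apply Hg, ray_leaves_disc; auto. lra.
  - apply (RInt_correct (V := R_CompleteNormedModule)).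
    apply (ex_RInt_continuous (V := R_CompleteNormedModule)).
    intros t _. apply continuous_on_line, Cg.
Qed.

Lemma ray_int_eq_RInt a1 a2 g r x y M : a1 ^ 2 + a2 ^ 2 = 1 -> 0 <= r ->
  vanishes_outside r g -> cont2 g -> 2 * (Rabs x + Rabs y) + r + 1 <= M ->
  ray_int a1 a2 g x y = RInt (fun t => g (x + t * a1) (y + t * a2)) 0 M.
Proof. intros. apply is_RInt_gen_unique, (is_RInt_gen_ray _ _ _ r); auto. Qed.

Lemma is_RInt_gen_ray_int a1 a2 g x y : a1 ^ 2 + a2 ^ 2 = 1 ->
  cont2 g -> bounded_support g ->
  is_RInt_gen (fun t => g (x + t * a1) (y + t * a2)) (at_point 0)
    (Rbar_locally p_infty) (ray_int a1 a2 g x y).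
Proof.
  intros Ha Cg [r [Hr Hg]].
  pose proof (Rle_refl (2 * (Rabs x + Rabs y) + r + 1)) as HM.
  rewrite (ray_int_eq_RInt _ _ _ r x y _ Ha Hr Hg Cg HM).
  exact (is_RInt_gen_ray _ _ _ r x y _ Ha Hr Hg Cg HM).
Qed.

Lemma ray_int_lcomb a1 a2 c1 g1 c2 g2 x y : a1 ^ 2 + a2 ^ 2 = 1 ->
  cont2 g1 -> bounded_support g1 -> cont2 g2 -> bounded_support g2 ->
  ray_int a1 a2 (lcomb c1 g1 c2 g2) x y
  = c1 * ray_int a1 a2 g1 x y + c2 * ray_int a1 a2 g2 x y.
Proof.
  intros Ha C1 S1 C2 S2.
  apply is_RInt_gen_unique.
  exact (is_RInt_gen_plus _ _ _ _
           (is_RInt_gen_scal _ c1 _ (is_RInt_gen_ray_int a1 a2 g1 x y Ha C1 S1))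
           (is_RInt_gen_scal _ c2 _ (is_RInt_gen_ray_int a1 a2 g2 x y Ha C2 S2))).
Qed.

Lemma Derive_shift (G : R -> R) c u : ex_derive G (u + c) ->
  Derive (fun z => G (z + c)) u = Derive G (u + c).
Proof.
  intros H. rewrite (Derive_comp G (fun z => z + c)); [| exact H | auto_derive; auto].
  replace (Derive (fun z => z + c) u) with 1; [ring |].
  symmetry. apply is_derive_unique. auto_derive; auto; ring.
Qed.

Lemma cont2_shear g a1 a2 y : cont2 g -> cont2 (fun u v => g (u + v * a1) (y + v * a2)).
Proof.
  intros H p.
  apply (continuous_comp_2 (fun q : R * R => fst q + snd q * a1)
                           (fun q : R * R => y + snd q * a2) g); [| | apply H].
  - apply (continuous_plus (fun q : R * R => fst q) (fun q : R * R => snd q * a1));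
      [apply continuous_fst |].
    apply (continuous_mult (fun q : R * R => snd q) (fun _ => a1));
      [apply continuous_snd | apply continuous_const].
  - apply (continuous_plus (fun _ : R * R => y) (fun q : R * R => snd q * a2));
      [apply continuous_const |].
    apply (continuous_mult (fun q : R * R => snd q) (fun _ => a2));
      [apply continuous_snd | apply continuous_const].
Qed.

Lemma is_derive_ray_int_d1 a1 a2 g x y : a1 ^ 2 + a2 ^ 2 = 1 -> C1c g ->
  is_derive (fun z => ray_int a1 a2 g z y) x (ray_int a1 a2 (d1 g) x y).
Proof.
  intros Ha [Hd1 _ Cg Cd1 _ [r [Hr Hg]]].
  set (M := 2 * (Rabs x + 1 + Rabs y) + r + 1).
  assert (Hline : forall z, ex_RInt (fun t => g (z + t * a1) (y + t * a2)) 0 M).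
  { intros z. apply (ex_RInt_continuous (V := R_CompleteNormedModule)).
    intros t _. apply continuous_on_line, Cg. }
  pose proof (Rabs_pos x). pose proof (Rabs_pos y).
  rewrite (ray_int_eq_RInt a1 a2 (d1 g) r x y M) by
    (auto using vanishes_outside_d1; unfold M; lra).
  apply is_derive_ext_loc with (fun z => RInt (fun t => g (z + t * a1) (y + t * a2)) 0 M).
  { exists (mkposreal 1 Rlt_0_1). intros z Hz. change (Rabs (z - x) < 1) in Hz.
    assert (Rabs z <= Rabs x + 1).
    { pose proof (Rabs_triang_inv z x). lra. }
    symmetry. apply (ray_int_eq_RInt a1 a2 g r); auto. unfold M; lra. }
  rewrite (RInt_ext _ (fun t => Derive (fun z => g (z + t * a1) (y + t * a2)) x)).
  2:{ intros t _. symmetry. apply (Derive_shift (fun w => g w (y + t * a2))), Hd1. }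
  apply (is_derive_RInt_param (fun z t => g (z + t * a1) (y + t * a2))).
  - apply filter_forall. intros z t _.
    apply (ex_derive_comp (fun w => g w (y + t * a2)) (fun z => z + t * a1));
      [apply Hd1 | auto_derive; auto].
  - intros t _.
    apply continuity_2d_pt_ext with (fun u v => d1 g (u + v * a1) (y + v * a2)).
    { intros u v. symmetry. apply (Derive_shift (fun w => g w (y + v * a2))), Hd1. }
    apply continuity_2d_pt_filterlim. exact (cont2_shear (d1 g) a1 a2 y Cd1 (x, t)).
  - apply filter_forall. exact Hline.
Qed.

Lemma is_derive_ray_int_d2 a1 a2 g x y : a1 ^ 2 + a2 ^ 2 = 1 -> C1c g ->
  is_derive (fun z => ray_int a1 a2 g x z) y (ray_int a1 a2 (d2 g) x y).
Proof.
  intros Ha Cg.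
  apply (is_derive_ray_int_d1 a2 a1 (swap g) y x); [lra | apply C1c_swap, Cg].
Qed.

Lemma ex_derive_ray_int_d1 a1 a2 g x y : a1 ^ 2 + a2 ^ 2 = 1 -> C1c g ->
  ex_derive (fun z => ray_int a1 a2 g z y) x.
Proof. intros Ha Cg. eexists. exact (is_derive_ray_int_d1 a1 a2 g x y Ha Cg). Qed.

Lemma ex_derive_ray_int_d2 a1 a2 g x y : a1 ^ 2 + a2 ^ 2 = 1 -> C1c g ->
  ex_derive (fun z => ray_int a1 a2 g x z) y.
Proof. intros Ha Cg. eexists. exact (is_derive_ray_int_d2 a1 a2 g x y Ha Cg). Qed.

Lemma Ddir_ray_int b1 b2 a1 a2 g x y : a1 ^ 2 + a2 ^ 2 = 1 -> C1c g ->
  Ddir b1 b2 (ray_int a1 a2 g) x y = ray_int a1 a2 (Ddir b1 b2 g) x y.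
Proof.
  intros Ha Cg. unfold Ddir at 1.
  replace (d1 (ray_int a1 a2 g) x y) with (ray_int a1 a2 (d1 g) x y)
    by (symmetry; apply is_derive_unique, is_derive_ray_int_d1; auto).
  replace (d2 (ray_int a1 a2 g) x y) with (ray_int a1 a2 (d2 g) x y)
    by (symmetry; apply is_derive_unique, is_derive_ray_int_d2; auto).
  symmetry. apply (ray_int_lcomb a1 a2 b1 (d1 g) b2 (d2 g)); auto using
    C1c_cont_d1, C1c_cont_d2, bounded_support_d1, bounded_support_d2, C1c_supp.
Qed.

Lemma is_derive_on_line g x y a1 a2 t : C1c g ->
  is_derive (fun t => g (x + t * a1) (y + t * a2)) t
    (Ddir a1 a2 g (x + t * a1) (y + t * a2)).
Proof.
  intros [Hd1 Hd2 _ Cd1 _ _]. apply is_derive_Reals.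
  replace (Ddir a1 a2 g (x + t * a1) (y + t * a2))
    with (d1 g (x + t * a1) (y + t * a2) * a1 + d2 g (x + t * a1) (y + t * a2) * a2)
    by (unfold Ddir; ring).
  apply (derivable_pt_lim_comp_2d g (fun t => x + t * a1) (fun t => y + t * a2)).
  - apply differentiable_pt_lim_partials; auto.
  - apply is_derive_Reals. auto_derive; auto; ring.
  - apply is_derive_Reals. auto_derive; auto; ring.
Qed.

(* Fundamental theorem of calculus along the ray, which leaves the support. *)
Lemma ray_int_Ddir_self a1 a2 g x y : a1 ^ 2 + a2 ^ 2 = 1 -> C1c g ->
  ray_int a1 a2 (Ddir a1 a2 g) x y = - g x y.
Proof.
  intros Ha Cg. destruct (C1c_supp g Cg) as [r [Hr Hg]].
  set (M := 2 * (Rabs x + Rabs y) + r + 1).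
  assert (Hvanish : vanishes_outside r (Ddir a1 a2 g)).
  { intros u v H. unfold Ddir.
    rewrite (vanishes_outside_d1 r g Hg), (vanishes_outside_d2 r g Hg) by exact H. ring. }
  assert (Hcont : cont2 (Ddir a1 a2 g))
    by (apply (cont2_lcomb a1 (d1 g) a2 (d2 g)); apply Cg).
  pose proof (Rabs_pos x). pose proof (Rabs_pos y).
  rewrite (ray_int_eq_RInt a1 a2 _ r x y M Ha Hr Hvanish Hcont) by (unfold M; lra).
  rewrite (is_RInt_unique _ _ _ _ (is_RInt_derive (V := R_CompleteNormedModule)
    (fun t => g (x + t * a1) (y + t * a2)) _ 0 M
    (fun t _ => is_derive_on_line g x y a1 a2 t Cg)
    (fun t _ => continuous_on_line _ x y a1 a2 t Hcont))).
  rewrite (Hg (x + M * a1) (y + M * a2)) by (apply ray_leaves_disc; auto; unfold M; lra).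
  unfold minus, plus, opp; simpl. rewrite !Rmult_0_l, !Rplus_0_r. ring.
Qed.

Lemma Ddir_ray_int_self a1 a2 g x y : a1 ^ 2 + a2 ^ 2 = 1 -> C1c g ->
  Ddir a1 a2 (ray_int a1 a2 g) x y = - g x y.
Proof.
  intros Ha Cg. rewrite Ddir_ray_int by assumption. apply ray_int_Ddir_self; assumption.
Qed.

Lemma Ddir_Ddir_Vline a1 a2 b1 b2 alpha gu gv x y :
  a1 ^ 2 + a2 ^ 2 = 1 -> b1 ^ 2 + b2 ^ 2 = 1 ->
  C1c gu -> C1c (Ddir b1 b2 gu) -> C1c gv ->
  Ddir a1 a2 (Ddir b1 b2 (lcomb (-1) (ray_int a1 a2 gu) alpha (ray_int b1 b2 gv))) x y
  = Ddir b1 b2 gu x y - alpha * Ddir a1 a2 gv x y.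
Proof.
  intros Ha Hb Cu Ch Cv.
  (* Arguments are given explicitly: a failed unification between real
     expressions can make Coq unfold the construction of R. *)
  assert (DbL : Ddir b1 b2 (lcomb (-1) (ray_int a1 a2 gu) alpha (ray_int b1 b2 gv))
                = lcomb (-1) (ray_int a1 a2 (Ddir b1 b2 gu)) (- alpha) gv).
  { apply functional_extensionality; intro p; apply functional_extensionality; intro q.
    rewrite (Ddir_lcomb b1 b2 (-1) _ alpha _ p q
               (ex_derive_ray_int_d1 a1 a2 gu p q Ha Cu) (ex_derive_ray_int_d2 a1 a2 gu p q Ha Cu)
               (ex_derive_ray_int_d1 b1 b2 gv p q Hb Cv) (ex_derive_ray_int_d2 b1 b2 gv p q Hb Cv)).
    rewrite (Ddir_ray_int b1 b2 a1 a2 gu p q Ha Cu), (Ddir_ray_int_self b1 b2 gv p q Hb Cv).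
    unfold lcomb. ring. }
  rewrite DbL, (Ddir_lcomb a1 a2 (-1) _ (- alpha) gv x y
                 (ex_derive_ray_int_d1 a1 a2 _ x y Ha Ch) (ex_derive_ray_int_d2 a1 a2 _ x y Ha Ch)
                 (C1c_ex_d1 gv Cv x y) (C1c_ex_d2 gv Cv x y)).
  rewrite (Ddir_ray_int_self a1 a2 (Ddir b1 b2 gu) x y Ha Ch).
  ring.
Qed.

Lemma Ltr_lcomb alpha u1 u2 v1 v2 f1 f2 :
  Ltr alpha u1 u2 v1 v2 f1 f2
  = lcomb (-1) (ray_int u1 u2 (lcomb u1 f1 u2 f2)) alpha (ray_int v1 v2 (lcomb v1 f1 v2 f2)).
Proof.
  do 2 (apply functional_extensionality; intro). unfold Ltr, lcomb, ray_int. ring.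
Qed.

Lemma Ttr_lcomb alpha u1 u2 v1 v2 f1 f2 :
  Ttr alpha u1 u2 v1 v2 f1 f2
  = lcomb (-1) (ray_int u1 u2 (lcomb (- u2) f1 u1 f2)) alpha
      (ray_int v1 v2 (lcomb (- v2) f1 v1 f2)).
Proof.
  do 2 (apply functional_extensionality; intro). unfold Ttr, lcomb, ray_int. ring.
Qed.

Lemma bounded_support_of_disc g : supp_in_disc g -> bounded_support g.
Proof. intros [r [Hr S]]. exists (r ^ 2). split; [nra | exact S]. Qed.

Theorem lemma7p1 (alpha u1 u2 : R) (f1 f2 : R -> R -> R) :
  alpha <> 0 ->
  u1 ^ 2 + u2 ^ 2 = 1 ->
  u1 * u2 <> 0 ->
  Cc2_disc f1 f2 ->
  (forall x1 x2 : R,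
     Ddir u1 u2 (Ddir (- u1) u2 (Ltr alpha u1 u2 (- u1) u2 f1 f2)) x1 x2
     = dt1 alpha u1 u2 f2 x1 x2 - dt2 alpha u1 u2 f1 x1 x2
   /\ dt1 alpha u1 u2 f2 x1 x2 - dt2 alpha u1 u2 f1 x1 x2
     = tdelta_perp alpha u1 u2 f1 f2 x1 x2) /\
  (forall x1 x2 : R,
     Ddir u1 u2 (Ddir (- u1) u2 (Ttr alpha u1 u2 (- u1) u2 f1 f2)) x1 x2
     = - (dt1 alpha u1 u2 f1 x1 x2 + dt2 alpha u1 u2 f2 x1 x2)
   /\ - (dt1 alpha u1 u2 f1 x1 x2 + dt2 alpha u1 u2 f2 x1 x2)
     = - tdelta alpha u1 u2 f1 f2 x1 x2).
Proof.
  intros _ Hu _ (H1 & H2 & S1 & S2).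
  apply bounded_support_of_disc in S1, S2.
  assert (Hv : (- u1) ^ 2 + u2 ^ 2 = 1) by (rewrite <- Hu; ring).
  destruct (C2_C1c f1 H1 S1) as [F1 _], (C2_C1c f2 H2 S2) as [F2 _].
  assert (Ddir_f_lcomb : forall b1 b2 c1 c2 x y, Ddir b1 b2 (lcomb c1 f1 c2 f2) x y
                   = c1 * Ddir b1 b2 f1 x y + c2 * Ddir b1 b2 f2 x y).
  { intros. apply Ddir_lcomb; [apply (C1c_ex_d1 f1 F1) | apply (C1c_ex_d2 f1 F1)
                             | apply (C1c_ex_d1 f2 F2) | apply (C1c_ex_d2 f2 F2)]. }
  split; intros x y; (split; [| reflexivity]).
  - rewrite Ltr_lcomb, (Ddir_Ddir_Vline u1 u2 (- u1) u2 alpha _ _ x y Hu Hv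
      (C1c_lcomb _ _ _ _ F1 F2) (C1c_Ddir_lcomb _ _ _ _ _ _ H1 H2 S1 S2) (C1c_lcomb _ _ _ _ F1 F2)).
    rewrite !Ddir_f_lcomb. unfold Ddir, dt1, dt2. ring.
  - rewrite Ttr_lcomb, (Ddir_Ddir_Vline u1 u2 (- u1) u2 alpha _ _ x y Hu Hv
      (C1c_lcomb _ _ _ _ F1 F2) (C1c_Ddir_lcomb _ _ _ _ _ _ H1 H2 S1 S2) (C1c_lcomb _ _ _ _ F1 F2)).
    rewrite !Ddir_f_lcomb. unfold Ddir, dt1, dt2. ring.
Qed.
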